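(* The correspondence $\underline\nu^*:\mathbf S^k_{++}\rightrightarrows K$, $A\mapsto\operatorname{argmin}_{\underline\nu\in K}F(\underline\nu,A)$, is upper hemicontinuous. Consequently, if $\underline\nu^*(A^* )=\{\underline\nu^0\}$ is a singleton and $A^{(N)}\to A^*$ in $\mathbf S^k_{++}$, then for every $\varepsilon>0$ there is $N_0$ such that $\|\underline\nu-\underline\nu^0\|<\varepsilon$ whenever $\underline\nu\in\underline\nu^*(A^{(N)})$ and $N\ge N_0$.
   Context: $\mathbf S^k_{++}$ is the set of $k\times k$ symmetric positive-definite matrices. $\mathcal I$ is a collection of nonempty subsets of $\{1,\dots,k\}$, $a\in\mathbb{R}^k\setminus\{0\}$ with $\operatorname{supp}(a)\subseteq\bigcup\mathcal I$. $P_I:\mathbb{R}^k\to\mathbb{R}^{|I|}$ is the coordinate projection onto $I$, and for $A\in\mathbf S^k_{++}$, $A_I^\dagger:=P_I^\top(P_IAP_I^\top)^{-1}P_I$. Costs $c_I\in\mathbb{R}^m_{\ge0}$, each with at least one positive coordinate, and $B_0\in\mathbb{R}^m_{>0}$; vector inequalities componentwise. $K=\{\underline\nu\in\mathbb{R}^{\mathcal I}:\underline\nu\ge0,\ \sum_I\nu_Ic_I\le B_0\}$ (compact). $F(\underline\nu,A)=a^\top(\sum_I\nu_IA_I^\dagger)^\dagger a$ if $a\in\operatorname{range}(\sum_I\nu_IA_I^\dagger)$ and $F(\underline\nu,A)=\infty$ otherwise; $\dagger$ denotes the Moore–Penrose pseudo-inverse. *)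

From HB Require Import structures.
From mathcomp Require Import all_boot all_order all_algebra.
From mathcomp Require Import all_classical all_reals all_analysis.
Set Implicit Arguments. Unset Strict Implicit. Unset Printing Implicit Defensive.
Import Order.TTheory GRing.Theory Num.Theory.
Import numFieldNormedType.Exports.
Local Open Scope classical_set_scope.
Local Open Scope ring_scope.

Section Defs.
Variable R : realType.

Definition spd (k : nat) (A : 'M[R]_k) : Prop :=
  A^T = A /\ forall x : 'cV[R]_k, x != 0 -> 0 < (x^T *m A *m x) 0 0.

(* coordinate projection P_I : R^k -> R^{|I|} (coordinates of I in enum order) *)
Definition coordproj (k : nat) (I : {set 'I_k}) : 'M[R]_(#|I|, k) :=
  \matrix_(r < #|I|, j < k) (j == @enum_val _ (mem I) r)%:R.

Definition Adag (k : nat) (A : 'M[R]_k) (I : {set 'I_k}) : 'M[R]_k :=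
  (coordproj I)^T *m invmx (coordproj I *m A *m (coordproj I)^T) *m coordproj I.

Definition penrose (k : nat) (M X : 'M[R]_k) : Prop :=
  [/\ M *m X *m M = M, X *m M *m X = X,
      (M *m X)^T = M *m X & (X *m M)^T = X *m M].

Definition mp_pinv (k : nat) (M : 'M[R]_k) : 'M[R]_k :=
  xget 0 [set X | penrose M X].

(* M := sum_I nu_I A_I^dagger, with collection indexed by 'I_n via I *)
Definition Msum (k n : nat) (I : 'I_n -> {set 'I_k}) (nu : 'rV[R]_n)
    (A : 'M[R]_k) : 'M[R]_k :=
  \sum_(i < n) nu 0 i *: Adag A (I i).

Definition Fobj (k n : nat) (I : 'I_n -> {set 'I_k}) (a : 'cV[R]_k)
    (nu : 'rV[R]_n) (A : 'M[R]_k) : \bar R :=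
  let M := Msum I nu A in
  if `[< exists x : 'cV[R]_k, M *m x = a >]
  then ((a^T *m mp_pinv M *m a) 0 0)%:E
  else +oo%E.

Definition Kset (m n : nat) (c : 'I_n -> 'cV[R]_m) (B0 : 'cV[R]_m)
  : set 'rV[R]_n :=
  [set nu | (forall i, 0 <= nu 0 i) /\
            (forall j, (\sum_(i < n) nu 0 i *: c i) j 0 <= B0 j 0)].

Definition nustar (k m n : nat) (I : 'I_n -> {set 'I_k}) (a : 'cV[R]_k)
    (c : 'I_n -> 'cV[R]_m) (B0 : 'cV[R]_m) (A : 'M[R]_k) : set 'rV[R]_n :=
  [set nu | Kset c B0 nu /\
            forall nu', Kset c B0 nu' -> (Fobj I a nu A <= Fobj I a nu' A)%E].

End Defs.

From HB Require Import structures.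
From mathcomp Require Import all_boot all_order all_algebra.
From mathcomp Require Import all_classical all_reals all_analysis.
From mathcomp Require Import ring lra.
Import Order.TTheory GRing.Theory Num.Theory.
Import numFieldNormedType.Exports.
Local Open Scope classical_set_scope.
Local Open Scope ring_scope.

Set Implicit Arguments. Unset Strict Implicit. Unset Printing Implicit Defensive.

(* F(nu, A) is the supremum over x of the concave quadratic
   Fquad nu A x = 2 a^T x - x^T M(nu, A) x,  M(nu, A) = sum_I nu_I A_I^dagger,
   which is continuous in (nu, A); so F is jointly lower semicontinuous.
   Dually, for every decomposition a = sum_I P_I^T z_I one has
   F(nu, A') <= sum_I z_I^T (P_I A' P_I^T) z_I / nu_I, with equality at A for
   the decomposition read off a solution of M(nu, A) y = a; the bound is
   continuous in A', so F(nu, .) is upper semicontinuous. Hence if nu is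
   beaten at A by some nu', then every (nu'', A') near (nu, A) is beaten by nu'
   as well, and covering the compact set K \ V by such neighbourhoods gives
   upper hemicontinuity. *)

Section QuadraticForms.
Variables (R : realType) (d : nat).
Implicit Types (S : 'M[R]_d) (x y z w : 'cV[R]_d).

Definition qform S x y : R := (x^T *m S *m y) 0 0.

Definition posdef S := forall x, x != 0 -> 0 < qform S x x.

Lemma qformBl S x1 x2 y : qform S (x1 - x2) y = qform S x1 y - qform S x2 y.
Proof. by rewrite /qform linearB /= !mulmxBl !mxE. Qed.

Lemma qformBr S x y1 y2 : qform S x (y1 - y2) = qform S x y1 - qform S x y2.
Proof. by rewrite /qform mulmxBr !mxE. Qed.

Lemma qformZl S c x y : qform S (c *: x) y = c * qform S x y.
Proof. by rewrite /qform linearZ /= -!scalemxAl mxE. Qed.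

Lemma qformZr S c x y : qform S x (c *: y) = c * qform S x y.
Proof. by rewrite /qform -scalemxAr mxE. Qed.

Lemma qformC S x y : S^T = S -> qform S x y = qform S y x.
Proof.
move=> sS; rewrite /qform -[in LHS](trmxK (x^T *m S *m y)) [LHS]mxE.
by rewrite !trmx_mul trmxK sS mulmxA.
Qed.

Lemma qform_invmx S w : S^T = S -> S \in unitmx ->
  qform (invmx S) w w = qform S (invmx S *m w) (invmx S *m w).
Proof.
move=> sS uS; rewrite /qform trmx_mul trmx_inv sS -!mulmxA.
by rewrite [S *m (_ *m _)]mulmxA mulmxV // mul1mx.
Qed.

Lemma dot_qform_invmx S z w : S \in unitmx ->
  (z^T *m w) 0 0 = qform S z (invmx S *m w).
Proof. by move=> uS; rewrite /qform -mulmxA [S *m _]mulmxA mulmxV // mul1mx. Qed.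

Lemma posdef_unitmx S : posdef S -> S \in unitmx.
Proof.
move=> pS; rewrite unitmxE unitfE; apply/negP => /det0P [v v0 vS].
have /pS : v^T != 0 by rewrite trmx_eq0.
by rewrite /qform trmxK vS mul0mx mxE ltxx.
Qed.

Lemma posdef_qform_ge0 S x : posdef S -> 0 <= qform S x x.
Proof.
move=> pS; have [->|x0] := eqVneq x 0; first by rewrite /qform mulmx0 mxE.
exact/ltW/pS.
Qed.

(* Young's inequality for the quadratic forms of [S / nu] and [nu * S^-1]. *)
Lemma qform_young S (nu : R) z w :
  S^T = S -> posdef S -> 0 <= nu -> (nu = 0 -> z = 0) ->
  2 * (z^T *m w) 0 0 - nu * qform (invmx S) w w <= qform S z z / nu.
Proof.
move=> sS pS nu_ge0 hz; have uS := posdef_unitmx pS.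
have [nu0|nu_neq0] := eqVneq nu 0.
  by rewrite (hz nu0) nu0 trmx0 mul0mx mxE mul0r invr0 !mulr0 subr0.
have nu_gt0 : 0 < nu by rewrite lt0r nu_neq0.
rewrite qform_invmx // (dot_qform_invmx z w uS) ler_pdivlMr //.
set v := invmx S *m w.
have := posdef_qform_ge0 (z - nu *: v) pS.
rewrite !qformBl !qformBr !qformZl !qformZr (qformC v z sS).
set Q := qform S z z; set b := qform S z v; set q := qform S v v.
nra.
Qed.

End QuadraticForms.

Section EntrywiseConvergence.
Context {R : realType} {T : Type} {F : set_system T} {FF : Filter F}.

Definition mxcvg p q (f : T -> 'M[R]_(p, q)) (L : 'M[R]_(p, q)) :=
  forall i j, f x i j @[x --> F] --> L i j.

Lemma cvg_sumr (I : Type) (r : seq I) (P : pred I) (g : I -> T -> R) (l : I -> R) :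
  (forall i, P i -> g i x @[x --> F] --> l i) ->
  \sum_(i <- r | P i) g i x @[x --> F] --> \sum_(i <- r | P i) l i.
Proof. by move=> h; apply: cvg_big => //; exact: add_continuous. Qed.

Lemma cvg_prodr (I : Type) (r : seq I) (P : pred I) (g : I -> T -> R) (l : I -> R) :
  (forall i, P i -> g i x @[x --> F] --> l i) ->
  \prod_(i <- r | P i) g i x @[x --> F] --> \prod_(i <- r | P i) l i.
Proof. by move=> h; apply: cvg_big => //; exact: mul_continuous. Qed.

Lemma mxcvg_cvg p q (f : T -> 'M[R]_(p, q)) L : f x @[x --> F] --> L -> mxcvg f L.
Proof.
by move=> h i j; exact: (cvg_comp f (fun M => M i j) h (@coord_continuous R p q i j L)).
Qed.

Lemma mxcvg_cst p q (L : 'M[R]_(p, q)) : mxcvg (fun=> L) L.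
Proof. by move=> i j; exact: cvg_cst. Qed.

Lemma mxcvgM p q s (f : T -> 'M[R]_(p, q)) (g : T -> 'M[R]_(q, s)) L M :
  mxcvg f L -> mxcvg g M -> mxcvg (fun x => f x *m g x) (L *m M).
Proof.
move=> hf hg i j; rewrite mxE; under eq_cvg do rewrite mxE.
by apply: cvg_sumr => l _; exact: cvgM.
Qed.

Lemma mxcvgZ p q (c : T -> R) (f : T -> 'M[R]_(p, q)) (c0 : R) L :
  c x @[x --> F] --> c0 -> mxcvg f L -> mxcvg (fun x => c x *: f x) (c0 *: L).
Proof. by move=> hc hf i j; rewrite mxE; under eq_cvg do rewrite mxE; exact: cvgM. Qed.

Lemma cvg_det n (f : T -> 'M[R]_n) L : mxcvg f L -> \det (f x) @[x --> F] --> \det L.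
Proof.
move=> h; rewrite /determinant; under eq_cvg do rewrite /determinant.
apply: cvg_sumr => s _; apply: cvgM; first exact: cvg_cst.
by apply: cvg_prodr => i _; exact: h.
Qed.

Lemma mxcvg_adj n (f : T -> 'M[R]_n) L : mxcvg f L -> mxcvg (fun x => \adj (f x)) (\adj L).
Proof.
move=> h i j; rewrite mxE /cofactor; under eq_cvg do rewrite mxE /cofactor.
apply: cvgM; first exact: cvg_cst.
by apply: cvg_det => u v; rewrite !mxE; under eq_cvg do rewrite !mxE; exact: h.
Qed.

Lemma mxcvgV n (f : T -> 'M[R]_n) L : L \in unitmx -> mxcvg f L ->
  mxcvg (fun x => invmx (f x)) (invmx L).
Proof.
move=> Lu h.
have detL0 : \det L != 0 by rewrite -unitfE -unitmxE.
have near_unit : \forall x \near F, f x \in unitmx.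
  have := @cvgr_dist_lt _ _ _ F FF _ _ (cvg_det h) `|\det L|.
  rewrite normr_gt0 => /(_ detL0).
  apply: filterS => x hx; rewrite unitmxE unitfE.
  by apply: contraTN hx => /eqP ->; rewrite subr0 ltxx.
have hadj : mxcvg (fun x => (\det (f x))^-1 *: \adj (f x)) (invmx L).
  by rewrite /invmx Lu; apply: mxcvgZ; [exact: cvgV (cvg_det h) | exact: mxcvg_adj].
move=> i j; apply: cvg_trans (hadj i j); apply: near_eq_cvg.
by apply: filterS near_unit => x xu; rewrite /invmx xu.
Qed.

Lemma qform_cvg d (f : T -> 'M[R]_d) L z :
  mxcvg f L -> qform (f x) z z @[x --> F] --> qform L z z.
Proof.
by move=> h; have /(_ 0 0) := mxcvgM (mxcvgM (mxcvg_cst (L := z^T)) h) (mxcvg_cst (L := z)).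
Qed.

End EntrywiseConvergence.

Arguments mxcvg {R T} F {p q} f L.

Section PenroseInverse.
Variables (R : realType) (k : nat).

Lemma row_free_mul_tr_unitmx r (B : 'M[R]_(r, k)) : row_free B -> B *m B^T \in unitmx.
Proof.
move=> fB; rewrite unitmxE unitfE; apply/negP => /det0P [v v0 vB].
have vB0 : ((v *m B) *m (v *m B)^T) 0 0 = 0.
  by rewrite trmx_mul !mulmxA -(mulmxA v) vB mul0mx mxE.
suff : v *m B == 0 by rewrite mulmx_free_eq0 // (negbTE v0).
apply/eqP/matrixP => i j; rewrite [RHS]mxE (ord1 i).
have sq_ge0 (l : 'I_k) : true -> 0 <= (v *m B) 0 l * (v *m B)^T l 0.
  by rewrite [X in _ * X]mxE -expr2 sqr_ge0.
rewrite mxE in vB0; have := psumr_eq0P sq_ge0 vB0 (i := j) erefl.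
by rewrite [X in _ * X]mxE -expr2 => /eqP; rewrite sqrf_eq0 => /eqP.
Qed.

Lemma penrose_row_free_factor r (B : 'M[R]_(r, k)) (G : 'M[R]_r) :
  row_free B -> G \in unitmx ->
  let H := invmx (B *m B^T) in
  penrose (B^T *m G *m B) (B^T *m H *m invmx G *m H *m B).
Proof.
move=> fB uG H; have uBB := row_free_mul_tr_unitmx fB.
have HT : H^T = H by rewrite trmx_inv trmx_mul trmxK.
have BBH p (Y : 'M[R]_(p, r)) : Y *m B *m B^T *m H = Y.
  by rewrite -(mulmxA Y) -mulmxA mulmxV // mulmx1.
have HBB p (Y : 'M[R]_(p, r)) : Y *m H *m B *m B^T = Y.
  by rewrite -(mulmxA (Y *m H)) -mulmxA mulVmx // mulmx1.
have GG p (Y : 'M[R]_(p, r)) : Y *m G *m invmx G = Y.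
  by rewrite -mulmxA mulmxV // mulmx1.
have GG' p (Y : 'M[R]_(p, r)) : Y *m invmx G *m G = Y.
  by rewrite -mulmxA mulVmx // mulmx1.
set E := B^T *m H *m B.
have ET : E^T = E by rewrite /E !trmx_mul trmxK HT mulmxA.
have MX : B^T *m G *m B *m (B^T *m H *m invmx G *m H *m B) = E.
  by rewrite !mulmxA BBH GG.
have XM : B^T *m H *m invmx G *m H *m B *m (B^T *m G *m B) = E.
  by rewrite !mulmxA HBB GG'.
by split; rewrite ?MX ?XM ?ET // /E !mulmxA HBB.
Qed.

Lemma sym_row_free_factor (M : 'M[R]_k) : M^T = M ->
  exists r (B : 'M[R]_(r, k)) (G : 'M[R]_r),
    [/\ row_free B, G \in unitmx & M = B^T *m G *m B].
Proof.
move=> sM.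
have [r [B [fB eqBM]]] : exists r (B : 'M[R]_(r, k)), row_free B /\ (B :=: M)%MS.
  by exists (\rank M), (row_base M); split; [exact: row_base_free | exact: eq_row_base].
have [D MDB] : exists D, M = D *m B by apply/submxP; rewrite eqBM.
have rankM : \rank M = r by rewrite -eqBM; apply/eqP.
have uBB := row_free_mul_tr_unitmx fB; set H := invmx (B *m B^T).
have HT : H^T = H by rewrite trmx_inv trmx_mul trmxK.
set E := B^T *m H *m B.
have ET : E^T = E by rewrite /E !trmx_mul trmxK HT mulmxA.
have ME : M *m E = M.
  by rewrite {1}MDB /E !mulmxA -(mulmxA D) -(mulmxA D) mulmxV // mulmx1 -MDB.
have EM : E *m M = M by rewrite -[LHS]trmxK trmx_mul ET sM ME sM.
set G := H *m B *m M *m B^T *m H.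
have MG : M = B^T *m G *m B by rewrite /G !mulmxA -[X in X = _]EM -{1}ME /E !mulmxA.
exists r, B, G; split => //; rewrite -row_free_unit -row_leq_rank -{1}rankM {1}MG.
exact: leq_trans (mxrankM_maxl _ B) (mxrankM_maxr _ G).
Qed.

Lemma penrose_exists (M : 'M[R]_k) : M^T = M -> exists X, penrose M X.
Proof.
move=> /sym_row_free_factor [r [B [G [fB uG ->]]]].
by eexists; exact: penrose_row_free_factor.
Qed.

Lemma sym_range_or_ker (M : 'M[R]_k) (a : 'cV[R]_k) :
  M^T = M -> ~ (exists y, M *m y = a) ->
  exists2 x : 'cV[R]_k, M *m x = 0 & (a^T *m x) 0 0 != 0.
Proof.
move=> sM ny; have : ~~ (a^T <= M)%MS.
  apply/negP => /submxP [D hD]; apply: ny; exists D^T.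
  by rewrite -[M]sM -trmx_mul -hD trmxK.
rewrite submxE => aM.
have [j aj] : exists j, (a^T *m cokermx M) 0 j != 0.
  apply/existsP; apply: contraR aM => /existsPn aM0.
  by apply/eqP/matrixP => i j; rewrite (ord1 i) [RHS]mxE; apply/eqP/negPn/aM0.
exists (cokermx M *m delta_mx j 0); first by rewrite mulmxA mulmx_coker mul0mx.
by rewrite mulmxA -colE mxE.
Qed.

End PenroseInverse.

Section Objective.
Variables (R : realType) (k n : nat) (I : 'I_n -> {set 'I_k}) (a : 'cV[R]_k).
Implicit Types (A : 'M[R]_k) (nu : 'rV[R]_n) (x y : 'cV[R]_k).

Definition principal A (J : {set 'I_k}) := coordproj R J *m A *m (coordproj R J)^T.

Lemma coordproj_mul_tr (J : {set 'I_k}) : coordproj R J *m (coordproj R J)^T = 1%:M.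
Proof.
apply/matrixP => r s; rewrite !mxE (bigD1 (enum_val r)) //= big1 => [|j /negbTE jr].
  rewrite !mxE eqxx mul1r addr0; case: (eqVneq r s) => [->|rs]; first by rewrite !eqxx.
  by case: eqP => // /enum_val_inj rs'; rewrite rs' eqxx in rs.
by rewrite !mxE jr mul0r.
Qed.

Lemma principal_sym A J : A^T = A -> (principal A J)^T = principal A J.
Proof. by move=> sA; rewrite /principal !trmx_mul trmxK sA mulmxA. Qed.

Lemma principal_posdef A J : spd A -> posdef (principal A J).
Proof.
move=> [_ pA] x x0; have : (coordproj R J)^T *m x != 0.
  apply: contra x0 => /eqP h.
  by rewrite -[x]mul1mx -(coordproj_mul_tr J) -mulmxA h mulmx0.
by move=> /pA; rewrite /qform /principal trmx_mul trmxK !mulmxA.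
Qed.

Lemma qform_Msum nu A x y :
  qform (Msum I nu A) x y =
  \sum_i nu 0 i * qform (invmx (principal A (I i)))
                    (coordproj R (I i) *m x) (coordproj R (I i) *m y).
Proof.
rewrite /qform /Msum mulmx_sumr mulmx_suml summxE; apply: eq_bigr => i _.
by rewrite -scalemxAr -scalemxAl mxE /Adag trmx_mul !mulmxA.
Qed.

Lemma Msum_sym nu A : A^T = A -> (Msum I nu A)^T = Msum I nu A.
Proof.
move=> sA; rewrite /Msum linear_sum; apply: eq_bigr => i _.
rewrite linearZ /= /Adag !trmx_mul trmxK trmx_inv.
by have := principal_sym (I i) sA; rewrite /principal => ->; rewrite mulmxA.
Qed.

Lemma Msum_qform_ge0 nu A x : spd A -> (forall i, 0 <= nu 0 i) ->
  0 <= qform (Msum I nu A) x x.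
Proof.
move=> hA nu_ge0; rewrite qform_Msum; apply: sumr_ge0 => i _.
have pS : posdef (principal A (I i)) := principal_posdef hA.
rewrite mulr_ge0 // qform_invmx ?posdef_unitmx ?principal_sym //; last by case: hA.
exact: posdef_qform_ge0.
Qed.

Definition Fquad nu A x := 2 * (a^T *m x) 0 0 - qform (Msum I nu A) x x.

Lemma Fobj_range nu A y : A^T = A -> Msum I nu A *m y = a ->
  Fobj I a nu A = (qform (Msum I nu A) y y)%:E.
Proof.
move=> sA hy; rewrite /Fobj /= asboolT; last by exists y.
have sM := Msum_sym nu sA.
rewrite /mp_pinv; case: xgetP => [X0 -> [MXM _ _ _]|noX]; last first.
  by have [X hX] := penrose_exists sM; have := noX X.
rewrite -hy trmx_mul sM /qform !mulmxA; set X := xget _ _ in MXM *.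
by rewrite -(mulmxA y^T _ X) -(mulmxA y^T (_ *m X)) MXM.
Qed.

Lemma Fquad_le_range nu A x y : spd A -> (forall i, 0 <= nu 0 i) ->
  Msum I nu A *m y = a -> Fquad nu A x <= qform (Msum I nu A) y y.
Proof.
move=> hA nu_ge0 hy; have sM := Msum_sym nu (proj1 hA).
have := Msum_qform_ge0 (x - y) hA nu_ge0.
rewrite !qformBl !qformBr (qformC x y sM) /Fquad.
have -> : (a^T *m x) 0 0 = qform (Msum I nu A) y x by rewrite -hy trmx_mul sM.
lra.
Qed.

Lemma Fquad_range nu A y : A^T = A -> Msum I nu A *m y = a ->
  Fquad nu A y = qform (Msum I nu A) y y.
Proof.
move=> sA hy; rewrite /Fquad.
have -> : (a^T *m y) 0 0 = qform (Msum I nu A) y y.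
  by rewrite -hy trmx_mul (Msum_sym nu sA).
lra.
Qed.

(* Off the range of [Msum I nu A], [Fquad] grows linearly along a kernel direction. *)
Lemma Fquad_unbounded nu A (r : R) : A^T = A ->
  ~ (exists y, Msum I nu A *m y = a) -> exists x, r < Fquad nu A x.
Proof.
move=> sA ny; have [x0 Mx0 ax0] := sym_range_or_ker (Msum_sym nu sA) ny.
set s := (a^T *m x0) 0 0 in ax0.
have Fquad_x0 t : Fquad nu A (t *: x0) = 2 * t * s.
  rewrite /Fquad qformZl qformZr.
  have -> : qform (Msum I nu A) x0 x0 = 0 by rewrite /qform -mulmxA Mx0 mulmx0 mxE.
  by rewrite -scalemxAr mxE !mulr0 subr0 mulrA.
exists (((`|r| + 1) / (2 * s)) *: x0); rewrite Fquad_x0.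
have -> : 2 * ((`|r| + 1) / (2 * s)) * s = `|r| + 1 by field.
by have := ler_norm r; lra.
Qed.

Lemma Fquad_le_Fobj nu A x : spd A -> (forall i, 0 <= nu 0 i) ->
  ((Fquad nu A x)%:E <= Fobj I a nu A)%E.
Proof.
move=> hA nu_ge0.
have [[y hy]|ny] := pselect (exists y, Msum I nu A *m y = a).
  by rewrite (Fobj_range (proj1 hA) hy) lee_fin; exact: Fquad_le_range.
by rewrite /Fobj /= asboolF // leey.
Qed.

Lemma lt_Fobj_Fquad nu A (r : R) : A^T = A ->
  (r%:E < Fobj I a nu A)%E -> exists x, r < Fquad nu A x.
Proof.
move=> sA; have [[y hy]|ny] := pselect (exists y, Msum I nu A *m y = a).
  by rewrite (Fobj_range sA hy) lte_fin => ry; exists y; rewrite Fquad_range.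
by move=> _; exact: Fquad_unbounded.
Qed.

Lemma Fobj_le_Fquad_ub nu A (r : R) : A^T = A ->
  (forall x, Fquad nu A x <= r) -> (Fobj I a nu A <= r%:E)%E.
Proof.
move=> sA ub; rewrite leNgt; apply/negP => /(lt_Fobj_Fquad sA) [x rx].
by have := ub x; rewrite leNgt rx.
Qed.


Definition decomp_cost A nu (z : forall i, 'cV[R]_#|I i|) : R :=
  \sum_i qform (principal A (I i)) (z i) (z i) / nu 0 i.

Lemma Fquad_le_decomp_cost nu A z x : spd A -> (forall i, 0 <= nu 0 i) ->
  a = \sum_i (coordproj R (I i))^T *m z i -> (forall i, nu 0 i = 0 -> z i = 0) ->
  Fquad nu A x <= decomp_cost A nu z.
Proof.
move=> hA nu_ge0 az z0.
rewrite /Fquad qform_Msum az linear_sum /= mulmx_suml summxE mulr_sumr -sumrB.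
apply: ler_sum => i _; rewrite trmx_mul trmxK -mulmxA.
apply: qform_young => //; last exact: z0.
  exact: principal_sym (proj1 hA).
exact: principal_posdef.
Qed.

Lemma decomp_of_range nu A y : spd A -> Msum I nu A *m y = a ->
  exists z, [/\ a = \sum_i (coordproj R (I i))^T *m z i,
    forall i, nu 0 i = 0 -> z i = 0 & decomp_cost A nu z = qform (Msum I nu A) y y].
Proof.
move=> hA hy.
exists (fun i => nu 0 i *: (invmx (principal A (I i)) *m (coordproj R (I i) *m y))).
split => [|i ->|]; last 2 first.
- by rewrite scale0r.
- rewrite qform_Msum; apply: eq_bigr => i _.
  have pS : posdef (principal A (I i)) := principal_posdef hA.
  rewrite qformZl qformZr -qform_invmx ?posdef_unitmx ?principal_sym //; last by case: hA.
  by have [->|nu0] := eqVneq (nu 0 i) 0; [rewrite !mul0r | field].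
rewrite -hy /Msum mulmx_suml; apply: eq_bigr => i _.
by rewrite -scalemxAr -scalemxAl /Adag /principal !mulmxA.
Qed.

Lemma principal_cvg T (F : set_system T) {FF : Filter F} (f : T -> 'M[R]_k) L J :
  mxcvg F f L -> mxcvg F (fun t => principal (f t) J) (principal L J).
Proof. by move=> h; apply: mxcvgM; [apply: mxcvgM h|]; exact: mxcvg_cst. Qed.

Lemma Fquad_cvg nu A x : spd A ->
  Fquad p.1 p.2 x @[p --> filter_prod (nbhs nu) (nbhs A)] --> Fquad nu A x.
Proof.
move=> hA; rewrite /Fquad qform_Msum; under eq_cvg do rewrite qform_Msum.
apply: cvgB; first exact: cvg_cst.
apply: cvg_sumr => i _; apply: cvgM; first exact: (mxcvg_cvg cvg_fst).
apply: qform_cvg; apply: mxcvgV; first exact/posdef_unitmx/principal_posdef.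
by apply: principal_cvg; exact: (mxcvg_cvg cvg_snd).
Qed.

Lemma decomp_cost_cvg nu A z :
  decomp_cost A' nu z @[A' --> A] --> decomp_cost A nu z.
Proof.
apply: (@cvg_sumr _ _ (nbhs A)) => i _; apply: cvgM; last exact: cvg_cst.
apply: qform_cvg; apply: principal_cvg; exact: (@mxcvg_cvg _ _ (nbhs A) _ _ _ _ cvg_id).
Qed.

Lemma Fobj_gt_near nu A (r : R) : spd A -> (r%:E < Fobj I a nu A)%E ->
  filter_prod (nbhs nu) (nbhs A) (fun p : 'rV[R]_n * 'M[R]_k =>
    (forall i, 0 <= p.1 0 i) -> spd p.2 -> (r%:E < Fobj I a p.1 p.2)%E).
Proof.
move=> hA /(lt_Fobj_Fquad (proj1 hA)) [x rx].
apply: filterS (cvgr_gt _ (Fquad_cvg (x := x) hA) _ rx) => p rp p_ge0 sp.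
by apply: lt_le_trans (Fquad_le_Fobj x sp p_ge0); rewrite lte_fin.
Qed.

Lemma Fobj_le_near nu A (r : R) : spd A -> (forall i, 0 <= nu 0 i) ->
  (Fobj I a nu A < r%:E)%E ->
  \forall A' \near A, spd A' -> (Fobj I a nu A' <= r%:E)%E.
Proof.
move=> hA nu_ge0 Fr.
have [y hy] : exists y, Msum I nu A *m y = a.
  by apply: contrapT => ny; move: Fr; rewrite /Fobj asboolF // ltNge leey.
have [z [az z0 cost]] := decomp_of_range hA hy.
rewrite (Fobj_range (proj1 hA) hy) lte_fin -cost in Fr.
apply: filterS (cvgr_lt _ (decomp_cost_cvg (z := z)) _ Fr) => A' costA' sA'.
apply: Fobj_le_Fquad_ub (proj1 sA') _ => x.
exact: le_trans (Fquad_le_decomp_cost x sA' nu_ge0 az z0) (ltW costA').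
Qed.

End Objective.

Lemma lte_fin_between (R : realType) (x : R) (y : \bar R) :
  (x%:E < y)%E -> exists2 r : R, x < r & (r%:E < y)%E.
Proof.
case: y => [y| |] //; last by move=> _; exists (x + 1); [lra | exact: ltry].
by rewrite lte_fin => xy; exists ((x + y) / 2); rewrite ?lte_fin; lra.
Qed.

Section Budget.
Variables (R : realType) (m n : nat) (c : 'I_n -> 'cV[R]_m) (B0 : 'cV[R]_m).

Lemma Kset_sumE (nu : 'rV[R]_n) j :
  (\sum_(i < n) nu 0 i *: c i) j 0 = \sum_(i < n) nu 0 i * c i j 0.
Proof. by rewrite summxE; apply: eq_bigr => i _; rewrite mxE. Qed.

Lemma Kset_closed : closed (Kset c B0).
Proof.
have -> : Kset c B0 =
   \bigcap_(i in [set: 'I_n]) ((fun nu : 'rV[R]_n => nu 0 i) @^-1` [set x | 0 <= x])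
   `&` \bigcap_(j in [set: 'I_m])
         ((fun nu : 'rV[R]_n => \sum_(i < n) nu 0 i * c i j 0) @^-1` [set x | x <= B0 j 0]).
  apply/seteqP; split => nu /=.
    by move=> [h1 h2]; split => i _ /=; [exact: h1 | rewrite -Kset_sumE; exact: h2].
  by move=> [h1 h2]; split => i; [exact: h1 | rewrite Kset_sumE; exact: h2].
apply: closedI; apply: closed_bigI => i _; apply: preimage_closed.
- by move=> x _; exact: coord_continuous.
- exact: closed_ge.
- move=> x _; apply: (@cvg_sumr _ _ (nbhs x)) => l _; apply: cvgM; last exact: cvg_cst.
  exact: coord_continuous.
- exact: closed_le.
Qed.

Hypothesis c_ge0 : forall i j, 0 <= c i j 0.
Hypothesis c_pos : forall i, exists j, 0 < c i j 0.
Hypothesis B0_pos : forall j, 0 < B0 j 0.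

Lemma Kset_coord_le nu i : Kset c B0 nu ->
  nu 0 i <= \sum_(l < n) \sum_(j < m) B0 j 0 / c l j 0.
Proof.
move=> [nu_ge0 nu_budget]; have [j cj] := c_pos i.
have ratio_ge0 l j' : 0 <= B0 j' 0 / c l j' 0 by rewrite divr_ge0 ?c_ge0 ?ltW.
have : nu 0 i * c i j 0 <= B0 j 0.
  apply: le_trans (nu_budget j); rewrite Kset_sumE (bigD1 i) //= lerDl.
  by apply: sumr_ge0 => l _; exact: mulr_ge0.
rewrite -ler_pdivlMr // => /le_trans; apply.
apply: (@le_trans _ _ (\sum_(j' < m) B0 j' 0 / c i j' 0)).
  by rewrite (bigD1 j) //= lerDl; apply: sumr_ge0.
by rewrite (bigD1 i) //= lerDl; apply: sumr_ge0 => l _; apply: sumr_ge0.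
Qed.

Lemma Kset_compact : compact (Kset c B0).
Proof.
apply: bounded_closed_compact Kset_closed.
set b := \sum_(l < n) \sum_(j < m) B0 j 0 / c l j 0.
have b_ge0 : 0 <= b by do 2!apply: sumr_ge0 => ? _; rewrite divr_ge0 ?c_ge0 ?ltW.
apply: filterS (nbhs_pinfty_ge (num_real b)) => M bM nu Knu.
apply: le_trans bM; rewrite [leLHS]/Num.norm /= mx_normrE.
apply: bigmax_le => // -[i j] _ /=.
by rewrite (ord1 i) ger0_norm; [exact: Kset_coord_le | case: Knu => + _; apply].
Qed.

End Budget.

Section UpperHemicontinuity.
Variables (R : realType) (k m n : nat) (I : 'I_n -> {set 'I_k}) (a : 'cV[R]_k).
Variables (c : 'I_n -> 'cV[R]_m) (B0 : 'cV[R]_m).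

Lemma not_nustar_near nu A : spd A -> Kset c B0 nu -> ~ nustar I a c B0 A nu ->
  filter_prod (nbhs nu) (nbhs A) (fun p : 'rV[R]_n * 'M[R]_k =>
    spd p.2 -> ~ nustar I a c B0 p.2 p.1).
Proof.
move=> hA Knu nopt.
have [nu' Knu' lt_nu'] : exists2 nu', Kset c B0 nu' & (Fobj I a nu' A < Fobj I a nu A)%E.
  apply: contrapT => better; apply: nopt; split => // nu' Knu'.
  by rewrite leNgt; apply/negP => lt; apply: better; exists nu'.
have [v Fv] : exists v, Fobj I a nu' A = v%:E.
  by move: lt_nu'; rewrite /Fobj; case: asboolP => _; [eexists | rewrite ltNge leey].
rewrite Fv in lt_nu'; have [r vr rF] := lte_fin_between lt_nu'.
have Fnu'r : (Fobj I a nu' A < r%:E)%E by rewrite Fv lte_fin.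
have le_near := Fobj_le_near hA (proj1 Knu') Fnu'r.
apply: filterS (filterI (Fobj_gt_near hA rF) (filter_prod2 (F := nbhs nu) le_near)).
move=> -[mu A'] /= [rFmu Fnu'r'] sA' [Kmu opt].
have := le_trans (opt nu' Knu') (Fnu'r' sA').
by rewrite leNgt (rFmu (proj1 Kmu) sA').
Qed.

Hypothesis c_ge0 : forall i j, 0 <= c i j 0.
Hypothesis c_pos : forall i, exists j, 0 < c i j 0.
Hypothesis B0_pos : forall j, 0 < B0 j 0.

Lemma nustar_uhc A V : spd A -> open V -> nustar I a c B0 A `<=` V ->
  \forall A' \near A, spd A' -> nustar I a c B0 A' `<=` V.
Proof.
move=> hA oV optV.
have Cc : compact (Kset c B0 `&` ~` V).
  apply: subclosed_compact (Kset_compact c_ge0 c_pos B0_pos) (@subIsetl _ _ _).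
  by apply: closedI; [exact: Kset_closed | exact: open_closedC].
have cover : \forall A' \near A,
    Kset c B0 `&` ~` V `<=` (fun nu => spd A' -> ~ nustar I a c B0 A' nu).
  apply: (proj1 (compact_near_coveringP _) Cc _ _ _ (nbhs_filter A)) => nu [Knu nVnu].
  by apply: not_nustar_near => // /optV.
apply: filterS cover => A' CA' sA' nu opt_nu; apply: contrapT => nVnu.
exact: CA' nu (conj (proj1 opt_nu) nVnu) sA' opt_nu.
Qed.

End UpperHemicontinuity.

Theorem lemmaE7 (R : realType) (k m n : nat)
  (I : 'I_n -> {set 'I_k}) (I_inj : injective I) (I_ne : forall i, I i != finset.set0)
  (a : 'cV[R]_k) (a_ne0 : a != 0)
  (a_supp : forall j : 'I_k, a j 0 != 0 -> exists i : 'I_n, j \in I i)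
  (c : 'I_n -> 'cV[R]_m) (c_ge0 : forall i j, 0 <= c i j 0)
  (c_pos : forall i, exists j, 0 < c i j 0)
  (B0 : 'cV[R]_m) (B0_pos : forall j, 0 < B0 j 0) :
  (forall A : 'M[R]_k, spd A ->
     forall V : set 'rV[R]_n, open V -> nustar I a c B0 A `<=` V ->
     exists2 e : R, 0 < e &
       forall A' : 'M[R]_k, spd A' -> `|A' - A| < e ->
         nustar I a c B0 A' `<=` V)
  /\
  (forall (Astar : 'M[R]_k) (nu0 : 'rV[R]_n) (A_ : nat -> 'M[R]_k),
     spd Astar -> nustar I a c B0 Astar = [set nu0] ->
     (forall N, spd (A_ N)) -> A_ @ \oo --> Astar ->
     forall eps : R, 0 < eps ->
       exists N0 : nat, forall N : nat, (N0 <= N)%N ->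
         forall nu, nustar I a c B0 (A_ N) nu -> `|nu - nu0| < eps).
Proof.
split=> [A hA V oV optV | As nu0 A_ hAs opt_As hA_ A_As eps eps_gt0].
  have /nbhs_ballP [e e_gt0 near_A] := nustar_uhc c_ge0 c_pos B0_pos hA oV optV.
  exists e; first exact: e_gt0.
  move=> A' sA' dA'; apply: near_A sA'.
  rewrite -ball_normE /= distrC; exact: dA'.
have optB : nustar I a c B0 As `<=` ball nu0 eps.
  by rewrite opt_As => _ ->; exact: ballxx.
have [N0 _ near_As] := A_As _ (nustar_uhc c_ge0 c_pos B0_pos hAs (ball_open nu0 eps) optB).
exists N0 => N le_N0N nu opt_nu.
have := near_As N le_N0N (hA_ N) nu opt_nu.
rewrite -ball_normE /= distrC; exact.
Qed.
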